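(* For every integer $k\ge 0$ let $\sigma^{-1}_{2^k}:\{1,\dots,2^k\}\to\{1,\dots,2^k\}$ be defined recursively by $\sigma^{-1}_{2^0}(1)=1$ and, for $k\ge 1$ and $1\le n\le 2^{k-1}$, $$\sigma^{-1}_{2^k}(2n-1)=\sigma^{-1}_{2^{k-1}}(n),\qquad \sigma^{-1}_{2^k}(2n)=2^k+1-\sigma^{-1}_{2^{k-1}}(n).$$ Then for every $k\ge 0$, $\sigma^{-1}_{2^k}$ is a permutation of $\{1,\dots,2^k\}$ and it is the inverse permutation of $\sigma_{2^k}$, i.e. $\sigma^{-1}_{2^k}(\sigma_{2^k}(n))=n$ for all $n\in\{1,\dots,2^k\}$.
   Context: Let $f:I\subset\mathbb{R}\to I$ be a unimodal map depending on a parameter, with a maximum at its critical point $C$, undergoing a period-doubling cascade. For the superstable $2^k$-periodic orbit $\{C,f(C),\dots,f^{2^k-1}(C)\}$ of the cascade, label its points in descending order of the real line as $C^*_{(1,2^k)}>C^*_{(2,2^k)}>\dots>C^*_{(2^k,2^k)}$, and let $\sigma_{2^k}(i)\in\{1,\dots,2^k\}$ be the number of iterations with $f^{\sigma_{2^k}(i)}(C)=C^*_{(i,2^k)}$. The permutation $\sigma_{2^k}=(\sigma_{2^k}(1),\dots,\sigma_{2^k}(2^k))$ of $\{1,\dots,2^k\}$ is (by earlier work) characterized purely combinatorially by $\sigma_{2^0}(1)=1$ and, for $k\ge 0$ and $n=1,\dots,2^k$, $$\sigma_{2^{k+1}}(n)=2\sigma_{2^k}(n)-1,\qquad \sigma_{2^{k+1}}(2^k+n)=2\sigma_{2^k}(2^k-n+1).$$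 This recurrence may be taken as the definition of $\sigma_{2^k}$. *)

From mathcomp Require Import all_boot.
Set Implicit Arguments. Unset Strict Implicit. Unset Printing Implicit Defensive.

(* Indices are 1-based naturals; only values on 1..2^k are meaningful. *)

(* sigma k = sigma_{2^k}:
   sigma_{2^0}(1) = 1;
   sigma_{2^{k+1}}(n)       = 2 sigma_{2^k}(n) - 1            (1 <= n <= 2^k)
   sigma_{2^{k+1}}(2^k + m) = 2 sigma_{2^k}(2^k - m + 1)      (1 <= m <= 2^k),
   i.e. for n = 2^k + m, 2^k - m + 1 = 2^(k+1) + 1 - n. *)
Fixpoint sigma (k : nat) (n : nat) : nat :=
  match k with
  | 0 => 1
  | k'.+1 => if n <= 2 ^ k' then (2 * sigma k' n).-1
             else 2 * sigma k' ((2 ^ k'.+1).+1 - n)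
  end.

Fixpoint sigma_inv (k : nat) (n : nat) : nat :=
  match k with
  | 0 => 1
  | k'.+1 => if odd n then sigma_inv k' (n.+1 %/ 2)
             else (2 ^ k'.+1).+1 - sigma_inv k' (n %/ 2)
  end.

Definition in_range (N n : nat) : bool := (1 <= n) && (n <= N).

From mathcomp Require Import all_boot.
From mathcomp Require Import zify.

Set Implicit Arguments.
Unset Strict Implicit.
Unset Printing Implicit Defensive.

(* Each level splits 1..2^(k+1) into two halves mapped by sigma onto the odd,
   resp. even, values, and sigma_inv reads the half back off the parity: an odd
   value 2s-1 comes from the lower half, an even value 2s from the reflected
   upper half. *)

Lemma sigma_in_range k n :
  in_range (2 ^ k) n -> in_range (2 ^ k) (sigma k n).
Proof.
rewrite /in_range; elim: k n => [|k IHk] n /andP [n_ge1 n_le] /=; first by [].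
have two_pow_gt0 : 0 < 2 ^ k by rewrite expn_gt0.
rewrite expnS in n_le *; case: ifP => lower.
- have /andP [s_ge1 s_le] := IHk n ltac:(apply/andP; lia).
  apply/andP; lia.
- have /andP [s_ge1 s_le] := IHk ((2 * 2 ^ k).+1 - n) ltac:(apply/andP; lia).
  apply/andP; lia.
Qed.

Lemma sigma_inv_in_range k n :
  in_range (2 ^ k) n -> in_range (2 ^ k) (sigma_inv k n).
Proof.
rewrite /in_range; elim: k n => [|k IHk] n /andP [n_ge1 n_le] /=; first by [].
have two_pow_gt0 : 0 < 2 ^ k by rewrite expn_gt0.
rewrite expnS in n_le *; case: ifP => n_odd.
- have /andP [s_ge1 s_le] := IHk (n.+1 %/ 2) ltac:(apply/andP; lia).
  apply/andP; lia.
- have /andP [s_ge1 s_le] := IHk (n %/ 2) ltac:(apply/andP; lia).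
  apply/andP; lia.
Qed.

Lemma sigmaK k n : in_range (2 ^ k) n -> sigma_inv k (sigma k n) = n.
Proof.
elim: k n => [|k IHk] n n_in /=; first by move: n_in; rewrite /in_range; lia.
have two_pow_gt0 : 0 < 2 ^ k by rewrite expn_gt0.
move: (n_in); rewrite /in_range expnS => /andP [n_ge1 n_le].
case: (leqP n (2 ^ k)) => lower.
- have n_in' : in_range (2 ^ k) n by rewrite /in_range; apply/andP; lia.
  have /andP [s_ge1 _] := sigma_in_range n_in'.
  have -> : odd (2 * sigma k n).-1 by lia.
  have -> : (2 * sigma k n).-1.+1 %/ 2 = sigma k n by lia.
  exact: IHk.
- set m := (2 * 2 ^ k).+1 - n.
  have m_in : in_range (2 ^ k) m by rewrite /in_range /m; apply/andP; lia.
  have -> : odd (2 * sigma k m) = false by lia.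
  have -> : 2 * sigma k m %/ 2 = sigma k m by lia.
  rewrite IHk // /m; lia.
Qed.

Lemma sigma_invK k n : in_range (2 ^ k) n -> sigma k (sigma_inv k n) = n.
Proof.
elim: k n => [|k IHk] n n_in /=; first by move: n_in; rewrite /in_range; lia.
have two_pow_gt0 : 0 < 2 ^ k by rewrite expn_gt0.
move: (n_in); rewrite /in_range expnS => /andP [n_ge1 n_le].
case n_odd: (odd n).
- have half_in : in_range (2 ^ k) (n.+1 %/ 2).
    by rewrite /in_range; apply/andP; lia.
  have /andP [_ ->] := sigma_inv_in_range half_in.
  rewrite IHk //; lia.
- have half_in : in_range (2 ^ k) (n %/ 2).
    by rewrite /in_range; apply/andP; lia.
  have /andP [s_ge1 s_le] := sigma_inv_in_range half_in.
  have -> : ((2 * 2 ^ k).+1 - sigma_inv k (n %/ 2) <= 2 ^ k) = false by lia.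
  have -> : (2 * 2 ^ k).+1 - ((2 * 2 ^ k).+1 - sigma_inv k (n %/ 2))
            = sigma_inv k (n %/ 2) by lia.
  rewrite IHk //; lia.
Qed.

Theorem proposition1 :
  forall k : nat,
    (* sigma_inv k is a permutation of {1,...,2^k} *)
    (forall n, in_range (2 ^ k) n -> in_range (2 ^ k) (sigma_inv k n)) /\
    (forall n m, in_range (2 ^ k) n -> in_range (2 ^ k) m ->
       sigma_inv k n = sigma_inv k m -> n = m) /\
    (forall m, in_range (2 ^ k) m -> exists2 n, in_range (2 ^ k) n & sigma_inv k n = m) /\
    (* and it is the inverse of sigma k *)
    (forall n, in_range (2 ^ k) n -> sigma_inv k (sigma k n) = n).
Proof.
move=> k; split; first exact: sigma_inv_in_range.
split; first by move=> n m n_in m_in eq_nm; rewrite -(sigma_invK n_in) eq_nm sigma_invK.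
split; last exact: sigmaK.
by move=> m m_in; exists (sigma k m); [exact: sigma_in_range | exact: sigmaK].
Qed.
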